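(* Let $d\ge3$ be an integer, $p_1,\dots,p_d\in(0,1)$, $q_j=1-p_j$, $P=\prod_{j=1}^dp_jq_j^{-1}$, and $\lambda\in(0,1)$. For every integer $n\ge L(P^{1/d},\lambda)$, $$\sum_{k=0}^n\binom nk^dP^k\ge\left(\frac{\sqrt{2\pi}}{e^2}\right)^dK(P^{1/d},d,\lambda)\,n^{-\frac{d-1}{2}}\left(1+P^{1/d}\right)^{dn}.$$
   Context: For $\alpha>0$, $\lambda\in(0,1)$, with $[x]$ the greatest integer $\le x$: $L(\alpha,\lambda)=\max\left\{\left[\left(\frac{(\alpha+1)+\sqrt{(\alpha+1)^2+4\lambda\alpha}}{2\lambda\alpha}\right)^2\right]+1,\ \left[\left(\frac{(\alpha+1)+\sqrt{(\alpha+1)^2+4\lambda\alpha}}{2\lambda}\right)^2\right]+1\right\}$; $C_1(\alpha,\lambda)=\max\left\{4,\frac{(\alpha+1)^2}{\alpha(1+\lambda\alpha)}\right\}\exp\!\left(-\frac12\frac{1+\lambda\alpha}{(1-\lambda)\alpha}\left((\alpha+1)^2+\frac{\lambda\alpha}{1+\lambda\alpha}\right)\right)$; $C_2(\alpha,\lambda)=\max\left\{4,\frac{(\alpha+1)^2}{\alpha+\lambda}\right\}\exp\!\left(-\frac12\frac{\alpha+\lambda}{(1-\lambda)\alpha^2}\left((\alpha+1)^2+\frac{\lambda\alpha^2}{\alpha+\lambda}\right)\right)$; $K(\alpha,d,\lambda)=\frac{(1-\lambda)\alpha+1}{\alpha+1}\left(C_1(\alpha,\lambda)\right)^d+\left(C_2(\alpha,\lambda)\right)^d$.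 *)

From Stdlib Require Import Reals Lra Lia ZArith.
Open Scope R_scope.

(* floor [x] = greatest integer <= x ; Int_part x = up x - 1 is exactly that *)
Definition floorR (x : R) : Z := Int_part x.

Definition Lroot (a l : R) : R := (a + 1) + sqrt ((a + 1)^2 + 4 * l * a).

Definition Lfun (a l : R) : Z :=
  Z.max (floorR ((Lroot a l / (2 * l * a))^2) + 1)
        (floorR ((Lroot a l / (2 * l))^2) + 1).

Definition C1 (a l : R) : R :=
  Rmax 4 ((a + 1)^2 / (a * (1 + l * a))) *
  exp (- (1/2) * ((1 + l * a) / ((1 - l) * a)) *
       ((a + 1)^2 + (l * a) / (1 + l * a))).

Definition C2 (a l : R) : R :=
  Rmax 4 ((a + 1)^2 / (a + l)) *
  exp (- (1/2) * ((a + l) / ((1 - l) * a^2)) *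
       ((a + 1)^2 + (l * a^2) / (a + l))).

Definition Kfun (a : R) (d : nat) (l : R) : R :=
  ((1 - l) * a + 1) / (a + 1) * (C1 a l)^d + (C2 a l)^d.

(* P = prod_{j=1}^d p_j / q_j, with p : nat -> R indexed 0..d-1 *)
Fixpoint prodR (f : nat -> R) (d : nat) : R :=
  match d with O => 1 | S k => prodR f k * f k end.

From Pilot Require Import Defs.
From Stdlib Require Import Reals ZArith Lra Lia Psatz.
Open Scope R_scope.

(* With a = P^(1/d) and x_k = C(n,k) a^k the sum is sum_k x_k^d, while
   sum_k x_k = (1+a)^n.  The weights x_k have mean m = n a/(1+a) and variance
   n a/(1+a)^2 <= n/4 relative to their total mass, so by Chebyshev the window
   |k - m| < sqrt n carries at least 3/4 of the mass and contains at most
   3 sqrt n integers.  On the window the tangent-line bound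
   x^d >= d t^(d-1) x - (d-1) t^d at t = (1+a)^n / (4 sqrt n) gives
   sum_k x_k^d >= 3 4^(-d) n^(-(d-1)/2) (1+a)^(dn).
   On the other side, C_1, C_2 <= 4 e^(-2) because y e^(-y/2) <= 4 e^(-2) for
   y >= 4, and sqrt(2 pi)/e^2 * 4 e^(-2) <= 1/4, so the right-hand side is at
   most 2 4^(-d) n^(-(d-1)/2) (1+a)^(dn). *)

Lemma Rdiv_le_cross p q r s : 0 < q -> 0 < s -> p * s <= r * q -> p / q <= r / s.
Proof.
  intros Hq Hs H. apply Rmult_le_reg_r with (q * s); [nra|].
  replace (p / q * (q * s)) with (p * s) by (field; lra).
  replace (r / s * (q * s)) with (r * q) by (field; lra). exact H.
Qed.

Lemma binomial_sum a n : sum_f_R0 (fun k => C n k * a^k) n = (1 + a)^n.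
Proof.
  rewrite Rplus_comm, binomial. apply sum_eq. intros k _. rewrite pow1. ring.
Qed.

Lemma binomial_absorption N j : (j <= N)%nat ->
  INR (S j) * C (S N) (S j) = INR (S N) * C N j.
Proof.
  intros Hj. unfold C. replace (S N - S j)%nat with (N - j)%nat by lia.
  rewrite !fact_simpl, !mult_INR.
  pose proof (INR_fact_neq_0 N). pose proof (INR_fact_neq_0 j).
  pose proof (INR_fact_neq_0 (N - j)). pose proof (not_0_INR (S j) (Nat.neq_succ_0 j)).
  field. repeat split; assumption.
Qed.

Lemma binomial_first_moment a n :
  (1 + a) * sum_f_R0 (fun k => INR k * (C n k * a^k)) n = INR n * a * (1 + a)^n.
Proof.
  destruct n as [|N]; [simpl; ring|].
  rewrite decomp_sum by lia. simpl Init.Nat.pred.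
  rewrite (sum_eq _ (fun k => C N k * a^k * (INR (S N) * a))).
  2:{ intros k Hk. rewrite <- Rmult_assoc, binomial_absorption by lia. simpl pow. ring. }
  rewrite <- scal_sum, binomial_sum. simpl. ring.
Qed.

Lemma binomial_second_factorial_moment a n :
  (1 + a)^2 * sum_f_R0 (fun k => INR k * (INR k - 1) * (C n k * a^k)) n
  = INR n * (INR n - 1) * a^2 * (1 + a)^n.
Proof.
  destruct n as [|N]; [simpl; ring|].
  rewrite decomp_sum by lia. simpl Init.Nat.pred.
  rewrite (sum_eq _ (fun k => INR k * (C N k * a^k) * (INR (S N) * a))).
  2:{ intros k Hk. rewrite S_INR, Rplus_minus_r, <- S_INR.
      replace (INR (S k) * INR k * (C (S N) (S k) * a ^ S k))
        with (INR (S k) * C (S N) (S k) * INR k * a * a^k) by (simpl pow; ring).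
      rewrite binomial_absorption by lia. ring. }
  rewrite <- scal_sum.
  transitivity (INR (S N) * a * (1 + a) *
    ((1 + a) * sum_f_R0 (fun k => INR k * (C N k * a^k)) N)); [simpl; ring|].
  rewrite binomial_first_moment, S_INR. simpl. ring.
Qed.

Lemma binomial_variance a n : 1 + a <> 0 ->
  let m := INR n * a / (1 + a) in
  sum_f_R0 (fun k => (INR k - m)^2 * (C n k * a^k)) n
  = INR n * a / (1 + a)^2 * (1 + a)^n.
Proof.
  intros Ha m.
  rewrite (sum_eq _ (fun k => INR k * (INR k - 1) * (C n k * a^k)
                     + (INR k * (C n k * a^k) * (1 - 2 * m)
                        + C n k * a^k * m^2))) by (intros; ring).
  rewrite !sum_plus, <- !scal_sum, binomial_sum.
  apply Rmult_eq_reg_l with ((1 + a)^2); [|apply pow_nonzero; exact Ha].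
  transitivity ((1 + a)^2 * sum_f_R0 (fun k => INR k * (INR k - 1) * (C n k * a^k)) n
    + (1 + a) * (1 - 2 * m) * ((1 + a) * sum_f_R0 (fun k => INR k * (C n k * a^k)) n)
    + (1 + a)^2 * m^2 * (1 + a)^n); [ring|].
  rewrite binomial_second_factorial_moment, binomial_first_moment.
  unfold m. field. exact Ha.
Qed.

Definition window (m r : R) (k : nat) : R :=
  if Rlt_dec (Rabs (INR k - m)) r then 1 else 0.

Lemma window_bounds m r k : 0 <= window m r k <= 1.
Proof. unfold window. destruct Rlt_dec; lra. Qed.

Lemma chebyshev_window (w : nat -> R) m r n : 0 < r ->
  (forall k, (k <= n)%nat -> 0 <= w k) ->
  sum_f_R0 w n - sum_f_R0 (fun k => (INR k - m)^2 * w k) n / r^2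
  <= sum_f_R0 (fun k => window m r k * w k) n.
Proof.
  intros Hr Hw. unfold Rdiv. rewrite Rmult_comm, scal_sum, <- minus_sum.
  apply sum_Rle. intros k Hk.
  assert (Hr2 : 0 < r^2) by (apply pow_lt; exact Hr).
  replace (w k - (INR k - m)^2 * w k * / r^2) with ((1 - (INR k - m)^2 / r^2) * w k)
    by (field; lra).
  apply Rmult_le_compat_r; [exact (Hw k Hk)|].
  unfold window. destruct Rlt_dec as [_|Hout].
  - pose proof (Rle_mult_inv_pos _ _ (pow2_ge_0 (INR k - m)) Hr2). unfold Rdiv. lra.
  - apply Rnot_lt_le in Hout.
    assert (r^2 <= (INR k - m)^2).
    { rewrite <- (pow2_abs (INR k - m)). apply pow_incr. lra. }
    assert (0 <= ((INR k - m)^2 - r^2) * / r^2) by (apply Rle_mult_inv_pos; lra).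
    replace ((INR k - m)^2 / r^2) with (1 + ((INR k - m)^2 - r^2) * / r^2) by (field; lra).
    lra.
Qed.

Lemma sum_window_le_above m r n :
  sum_f_R0 (window m r) n <= Rmax 0 (INR n + 1 - (m - r)).
Proof.
  induction n as [|n IH]; simpl sum_f_R0.
  - unfold window. destruct Rlt_dec as [Hin|_]; [|apply Rmax_l].
    apply Rabs_def2 in Hin. simpl INR in *. apply Rmax_Rle. right. lra.
  - unfold window at 2. rewrite S_INR in *. destruct Rlt_dec as [Hin|_].
    + apply Rabs_def2 in Hin.
      rewrite Rmax_right in IH by lra. rewrite Rmax_right by lra. lra.
    + rewrite Rplus_0_r. eapply Rle_trans; [exact IH|]. apply Rle_max_compat_l. lra.
Qed.

Lemma sum_window_le m r n : 0 <= r -> sum_f_R0 (window m r) n <= 2 * r + 1.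
Proof.
  intros Hr. induction n as [|n IH].
  - simpl. pose proof (window_bounds m r 0). lra.
  - simpl sum_f_R0. pose proof (sum_window_le_above m r n) as Habove.
    unfold window at 2. destruct Rlt_dec as [Hin|_]; [|lra].
    apply Rabs_def2 in Hin. rewrite S_INR in Hin.
    rewrite Rmax_right in Habove by lra. lra.
Qed.

Lemma pow_ge_tangent e x t : 0 <= x -> 0 <= t ->
  INR (S e) * t^e * x - INR e * t^(S e) <= x^(S e).
Proof.
  intros Hx Ht. induction e as [|e IH]; [simpl; lra|].
  (* Multiply the bound for e by x and add (e+1) t^e (x - t)^2 >= 0. *)
  pose proof (Rmult_le_compat_l x _ _ Hx IH).
  pose proof (pow_le t e Ht). pose proof (pos_INR e).
  assert (0 <= (INR e + 1) * t^e * ((x - t) * (x - t))).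
  { apply Rmult_le_pos; [apply Rmult_le_pos; lra|apply Rle_0_sqr]. }
  rewrite !S_INR in *. simpl in *. nra.
Qed.

Lemma sum_pow_ge_tangent (x h : nat -> R) e t n : 0 <= t ->
  (forall k, (k <= n)%nat -> 0 <= x k) -> (forall k, 0 <= h k <= 1) ->
  t^e * (INR (S e) * sum_f_R0 (fun k => h k * x k) n - INR e * t * sum_f_R0 h n)
  <= sum_f_R0 (fun k => x k ^ S e) n.
Proof.
  intros Ht Hx Hh.
  transitivity (sum_f_R0 (fun k => h k * (INR (S e) * t^e * x k - INR e * t^(S e))) n).
  - rewrite (sum_eq (fun k => h k * (INR (S e) * t^e * x k - INR e * t^(S e)))
                    (fun k => h k * x k * (INR (S e) * t^e) - h k * (INR e * t^(S e))))
      by (intros; ring).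
    rewrite minus_sum, <- !scal_sum. simpl pow. apply Req_le. ring.
  - apply sum_Rle. intros k Hk.
    pose proof (pow_ge_tangent e (x k) t (Hx k Hk) Ht).
    pose proof (pow_le (x k) (S e) (Hx k Hk)). specialize (Hh k).
    nra.
Qed.

Lemma binomial_weight_nonneg a n k : 0 <= a -> 0 <= C n k * a^k.
Proof.
  intros Ha. apply Rmult_le_pos; [|apply pow_le; exact Ha].
  left. apply Rdiv_lt_0_compat; [|apply Rmult_lt_0_compat]; apply INR_fact_lt_0.
Qed.

Lemma binomial_window_mass a n : 0 <= a -> (1 <= n)%nat ->
  3 / 4 * (1 + a)^n <=
  sum_f_R0 (fun k => window (INR n * a / (1 + a)) (sqrt (INR n)) k * (C n k * a^k)) n.
Proof.
  intros Ha Hn.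
  assert (HnR : 0 < INR n) by (apply lt_0_INR; lia).
  eapply Rle_trans; [|apply chebyshev_window; [apply sqrt_lt_R0; exact HnR|]].
  2:{ intros k _. apply binomial_weight_nonneg, Ha. }
  rewrite binomial_variance, binomial_sum by lra.
  rewrite pow2_sqrt by lra.
  assert (HS : 0 < (1 + a)^n) by (apply pow_lt; lra).
  assert (a / (1 + a)^2 <= 1 / 4).
  { apply Rdiv_le_cross; [apply pow_lt; lra|lra|].
    pose proof (pow2_ge_0 (a - 1)). lra. }
  replace (INR n * a / (1 + a)^2 * (1 + a)^n / INR n) with (a / (1 + a)^2 * (1 + a)^n)
    by (field; lra).
  nra.
Qed.

Lemma sum_binomial_pow_ge a n e : 0 <= a -> (1 <= n)%nat ->
  3 * (/ 4)^(S e) * ((1 + a)^n)^(S e) / sqrt (INR n) ^ e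
  <= sum_f_R0 (fun k => (C n k * a^k)^(S e)) n.
Proof.
  intros Ha Hn.
  set (S0 := (1 + a)^n). set (s := sqrt (INR n)).
  assert (HS : 0 < S0) by (apply pow_lt; lra).
  assert (Hs : 1 <= s).
  { unfold s. rewrite <- sqrt_1. apply sqrt_le_1_alt. apply (le_INR 1). exact Hn. }
  set (t := S0 / (4 * s)).
  assert (Ht : t * s = S0 / 4) by (unfold t; field; lra).
  assert (Ht0 : 0 < t) by (unfold t; apply Rdiv_lt_0_compat; lra).
  eapply Rle_trans;
    [|apply (sum_pow_ge_tangent _ (window (INR n * a / (1 + a)) s) e t n);
      [lra|intros k _; apply binomial_weight_nonneg, Ha|apply window_bounds]].
  pose proof (binomial_window_mass a n Ha Hn) as Hmass. fold S0 s in Hmass.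
  pose proof (sum_window_le (INR n * a / (1 + a)) s n) as Hcount.
  set (M := sum_f_R0 _ n) in Hmass |- *.
  set (W := sum_f_R0 (window _ s) n) in Hcount |- *.
  assert (Hbracket : 3 / 4 * S0 <= INR (S e) * M - INR e * t * W).
  { pose proof (pos_INR e). rewrite S_INR.
    assert (t * W <= 3 / 4 * S0) by nra.
    nra. }
  assert (Htpow : t^e = (/ 4)^e * S0^e / s^e).
  { unfold t, Rdiv. rewrite Rinv_mult, !Rpow_mult_distr, !pow_inv. ring. }
  apply Rle_trans with (t^e * (3 / 4 * S0)).
  - rewrite Htpow. simpl pow. right. field. apply pow_nonzero. lra.
  - apply Rmult_le_compat_l; [apply pow_le; lra|exact Hbracket].
Qed.

Lemma mul_exp_neg_half_le w y : 4 <= w -> w <= y ->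
  w * exp (- (1/2) * y) <= 4 * exp (-2).
Proof.
  intros Hw Hy.
  assert (Hsplit : exp (-2) = exp (- (1/2) * y) * exp ((y - 4) / 2))
    by (rewrite <- exp_plus; f_equal; field).
  pose proof (exp_ineq1_le ((y - 4) / 2)). pose proof (exp_pos (- (1/2) * y)).
  rewrite Hsplit. nra.
Qed.

Lemma four_le_sqr_succ_div a : 0 < a -> 4 <= (a + 1)^2 / a.
Proof.
  intros Ha. replace 4 with (4 / 1) by field.
  apply Rdiv_le_cross; [lra|exact Ha|]. pose proof (pow2_ge_0 (a - 1)). lra.
Qed.

Lemma Rmax4_mul_exp_le a M u v : 0 < a ->
  M <= (a + 1)^2 / a -> 1 / a <= u -> (a + 1)^2 <= v ->
  Rmax 4 M * exp (- (1/2) * u * v) <= 4 * exp (-2).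
Proof.
  intros Ha HM Hu Hv.
  pose proof (four_le_sqr_succ_div a Ha).
  assert ((a + 1)^2 / a <= u * v).
  { replace ((a + 1)^2 / a) with (1 / a * (a + 1)^2) by (field; lra).
    apply Rmult_le_compat; try lra.
    - left. apply Rdiv_lt_0_compat; lra.
    - apply pow2_ge_0. }
  replace (- (1/2) * u * v) with (- (1/2) * (u * v)) by ring.
  apply mul_exp_neg_half_le; [apply Rmax_l|apply Rmax_lub; lra].
Qed.

Lemma C1_bounds a l : 0 < a -> 0 < l < 1 -> 0 <= Defs.C1 a l <= 4 * exp (-2).
Proof.
  intros Ha Hl. split.
  - unfold Defs.C1. pose proof (Rmax_l 4 ((a + 1)^2 / (a * (1 + l * a)))).
    pose proof (exp_pos (- (1/2) * ((1 + l * a) / ((1 - l) * a))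
                         * ((a + 1)^2 + l * a / (1 + l * a)))). nra.
  - apply (Rmax4_mul_exp_le a); [exact Ha| | |].
    + apply Rdiv_le_cross; [nra|exact Ha|]. apply Rmult_le_compat_l; [apply pow2_ge_0|nra].
    + apply Rdiv_le_cross; nra.
    + assert (0 <= l * a / (1 + l * a)) by (apply Rle_mult_inv_pos; nra). lra.
Qed.

Lemma C2_bounds a l : 0 < a -> 0 < l < 1 -> 0 <= Defs.C2 a l <= 4 * exp (-2).
Proof.
  intros Ha Hl. split.
  - unfold Defs.C2. pose proof (Rmax_l 4 ((a + 1)^2 / (a + l))).
    pose proof (exp_pos (- (1/2) * ((a + l) / ((1 - l) * a^2))
                         * ((a + 1)^2 + l * a^2 / (a + l)))). nra.
  - assert (Ha2 : 0 < a^2) by (apply pow_lt, Ha).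
    apply (Rmax4_mul_exp_le a); [exact Ha| | |].
    + apply Rdiv_le_cross; [lra|exact Ha|]. pose proof (pow2_ge_0 (a + 1)). nra.
    + apply Rdiv_le_cross; [lra|nra|]. simpl. nra.
    + assert (0 <= l * a^2 / (a + l)) by (apply Rle_mult_inv_pos; nra). lra.
Qed.

Lemma Kfun_le a d l : 0 < a -> 0 < l < 1 -> Kfun a d l <= 2 * (4 * exp (-2))^d.
Proof.
  intros Ha Hl. unfold Kfun.
  pose proof (C1_bounds a l Ha Hl). pose proof (C2_bounds a l Ha Hl).
  assert (0 <= Defs.C1 a l ^ d <= (4 * exp (-2))^d) by (split; [apply pow_le|apply pow_incr]; lra).
  assert (Defs.C2 a l ^ d <= (4 * exp (-2))^d) by (apply pow_incr; lra).
  assert (0 <= ((1 - l) * a + 1) / (a + 1) <= 1).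
  { split; [apply Rle_mult_inv_pos; nra|].
    apply Rmult_le_reg_r with (a + 1); [lra|].
    unfold Rdiv. rewrite Rmult_assoc, Rinv_l by lra. nra. }
  nra.
Qed.

Lemma pow_succ_le_exp x n : 0 <= x -> (1 + x)^n <= exp (INR n * x).
Proof.
  intros Hx. induction n as [|n IH].
  - simpl. rewrite Rmult_0_l, exp_0. lra.
  - rewrite S_INR, Rmult_plus_distr_r, Rmult_1_l, exp_plus. simpl pow.
    rewrite Rmult_comm. apply Rmult_le_compat; [apply pow_le; lra|lra|exact IH|].
    apply exp_ineq1_le.
Qed.

Lemma exp2_ge : 69 / 10 <= exp 2.
Proof.
  replace 2 with (INR 32 * (1 / 16)) by (simpl; lra).
  eapply Rle_trans; [|apply pow_succ_le_exp; lra]. simpl. lra.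
Qed.

Lemma sqrt_2PI_le : sqrt (2 * PI) <= 283 / 100.
Proof.
  pose proof PI_4. rewrite <- (sqrt_pow2 (283 / 100)) by lra.
  apply sqrt_le_1_alt. lra.
Qed.

Lemma gaussian_constant_le : sqrt (2 * PI) / exp 2 * (4 * exp (-2)) <= / 4.
Proof.
  pose proof exp2_ge. pose proof sqrt_2PI_le.
  replace (exp (-2)) with (/ exp 2) by (rewrite <- exp_Ropp; f_equal; ring).
  replace (sqrt (2 * PI) / exp 2 * (4 * / exp 2)) with (4 * sqrt (2 * PI) / (exp 2 * exp 2))
    by (field; pose proof (exp_pos 2); lra).
  replace (/ 4) with (1 / 4) by field. apply Rdiv_le_cross; nra.
Qed.

Lemma gaussian_factor_Kfun_le a d l : 0 < a -> 0 < l < 1 ->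
  (sqrt (2 * PI) / exp 2)^d * Kfun a d l <= 2 * (/ 4)^d.
Proof.
  intros Ha Hl.
  set (q := sqrt (2 * PI) / exp 2).
  assert (Hq : 0 < q).
  { apply Rdiv_lt_0_compat; [apply sqrt_lt_R0; pose proof PI_RGT_0; lra|apply exp_pos]. }
  assert (Hqc : (q * (4 * exp (-2)))^d <= (/ 4)^d).
  { apply pow_incr. split; [|exact gaussian_constant_le].
    pose proof (exp_pos (-2)). nra. }
  rewrite Rpow_mult_distr in Hqc.
  pose proof (pow_le q d (Rlt_le _ _ Hq)).
  pose proof (Kfun_le a d l Ha Hl). nra.
Qed.

Lemma prodR_pos (f : nat -> R) d : (forall j, (j < d)%nat -> 0 < f j) -> 0 < prodR f d.
Proof.
  induction d as [|d IH]; intros Hf; simpl; [lra|].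
  apply Rmult_lt_0_compat; [apply IH; intros; apply Hf; lia|apply Hf; lia].
Qed.

Lemma pow_Rpower_inv x d : 0 < x -> (0 < d)%nat -> Rpower x (1 / INR d) ^ d = x.
Proof.
  intros Hx Hd. assert (0 < INR d) by (apply lt_0_INR; exact Hd).
  rewrite <- Rpower_pow by (apply exp_pos). rewrite Rpower_mult.
  replace (1 / INR d * INR d) with 1 by (field; lra). apply Rpower_1, Hx.
Qed.

Lemma Rpower_neg_half_pred x e : 0 < x ->
  Rpower x (- (INR (S e) - 1) / 2) = / sqrt x ^ e.
Proof.
  intros Hx. replace (- (INR (S e) - 1) / 2) with (- (/ 2 * INR e)) by (rewrite S_INR; field).
  rewrite Rpower_Ropp, <- Rpower_mult, Rpower_sqrt, Rpower_pow by (try apply sqrt_lt_R0; exact Hx).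
  reflexivity.
Qed.

Lemma floorR_nonneg x : 0 <= x -> (0 <= floorR x)%Z.
Proof.
  intros Hx. unfold floorR, Int_part. destruct (archimed x) as [Hup _].
  assert (0 < up x)%Z by (apply lt_0_IZR; lra). lia.
Qed.

Lemma Lfun_pos a l : (1 <= Lfun a l)%Z.
Proof.
  unfold Lfun. pose proof (floorR_nonneg _ (pow2_ge_0 (Lroot a l / (2 * l * a)))). lia.
Qed.

Theorem proposition15 (d : nat) (p : nat -> R) (l : R) :
  (3 <= d)%nat ->
  (forall j, (j < d)%nat -> 0 < p j < 1) ->
  0 < l < 1 ->
  let P := prodR (fun j => p j / (1 - p j)) d in
  let a := Rpower P (1 / INR d) in
  forall n : nat, (Lfun a l <= Z.of_nat n)%Z ->
  sum_f_R0 (fun k => (C n k)^d * P^k) n >=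
    (sqrt (2 * PI) / exp 2)^d * Kfun a d l *
    Rpower (INR n) (- (INR d - 1) / 2) * (1 + a)^(d * n).
Proof.
  intros Hd Hp Hl P a n Hn.
  assert (HP : 0 < P).
  { apply prodR_pos. intros j Hj. destruct (Hp j Hj). apply Rdiv_lt_0_compat; lra. }
  assert (Ha : 0 < a) by apply exp_pos.
  assert (HaP : a^d = P) by (apply pow_Rpower_inv; [exact HP|lia]).
  assert (Hn1 : (1 <= n)%nat) by (pose proof (Lfun_pos a l); lia).
  clearbody P a. subst P. destruct d as [|e]; [lia|].
  rewrite (sum_eq _ (fun k => (C n k * a^k)^(S e)))
    by (intros k _; rewrite <- pow_mult, Nat.mul_comm, pow_mult, Rpow_mult_distr; reflexivity).
  rewrite Rpower_neg_half_pred, Nat.mul_comm, pow_mult by (apply lt_0_INR; lia).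
  apply Rle_ge. eapply Rle_trans; [|apply sum_binomial_pow_ge; [lra|exact Hn1]].
  pose proof (gaussian_factor_Kfun_le a (S e) l Ha Hl).
  assert (0 <= ((1 + a)^n)^(S e) / sqrt (INR n) ^ e).
  { apply Rle_mult_inv_pos; [apply pow_le, pow_le; lra|apply pow_lt, sqrt_lt_R0, lt_0_INR; lia]. }
  assert (0 <= (/ 4)^(S e)) by (apply pow_le; lra).
  unfold Rdiv in *. nra.
Qed.
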